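(* Consider the topological map $\bar G$ of a narrow-passage warehouse with shelves $s\in\{1,\dots,S\}$ arranged in a rectangular array. For each shelf $s$ choose one of its two 0-instance orientations $I_s$ (clockwise or counterclockwise directed cycle), and choose an arbitrary linear order $s_1,s_2,\dots,s_S$ of the shelves. Build a directed graph by processing the shelves in this order: start with the vertices and directed edges of $I_{s_1}$, and when processing $I_{s_k}$ add its vertices and add each of its directed edges whose underlying undirected edge has not already been oriented by an earlier processed cycle (edges already oriented keep their earlier orientation). Then in the resulting directed graph, for any two vertices $v_s,v_t\in\bar V$ there exists a directed path from $v_s$ to $v_t$ (i.e. the graph is strongly connected).
   Context: Warehouse: a grid with horizontal passage rows $\mathcal H=\{i_1<i_2<\dots\}$ and vertical passage columns $\mathcal V=\{j_1<j_2<\dots\}$ (each of width one cell), with rectangular shelf blocks filling the regions between consecutive passage rows and consecutive passage columns; there are $S=(|\mathcal H|-1)(|\mathcal V|-1)$ shelves. Topological map $\bar G=(\bar V,\bar E)$: its vertices are the crossing vertices (cells $(i,j)\in\mathcal H\times\mathcal V$) and one passage vertex for each passage segment between two consecutive crossings along a passage row or column; each passage vertex is adjacent exactly to the two crossing vertices at the ends of its segment, and there are no other edges. Each shelf $s$ is surrounded by four crossing vertices $v_i,v_j,v_m,v_n$ (its corners, in cyclic order) and four passage vertices $v'_i,v'_j,v'_m,v'_n$ (its sides, $v'_i$ between $v_i$ and $v_j$, etc.). The clockwise 0-instance of $s$ is the directed cycle $v_i\to v'_i\to v_j\to v'_j\to v_m\to v'_m\to v_n\to v'_n\to v_i$, and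 the counterclockwise 0-instance is the reverse cycle $v_i\to v'_n\to v_n\to v'_m\to v_m\to v'_j\to v_j\to v'_i\to v_i$. *)

From HB Require Import structures.
From mathcomp Require Import all_boot.
Set Implicit Arguments. Unset Strict Implicit. Unset Printing Implicit Defensive.

(* Vertices of the topological map of a warehouse with p passage rows and
   q passage columns (indexed 0..p-1 and 0..q-1 in increasing order).
   Cross a b  : crossing of passage row a and passage column b;
   HPass a b  : passage vertex of the segment of passage row a between
                columns b and b+1;
   VPass a b  : passage vertex of the segment of passage column b between
                rows a and a+1. *)
Inductive vertex := Cross of nat & nat | HPass of nat & nat | VPass of nat & nat.

Definition vertex_code (v : vertex) : nat * nat * nat :=
  match v with
  | Cross a b => (0, a, b) | HPass a b => (1, a, b) | VPass a b => (2, a, b)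
  end.
Definition vertex_decode (c : nat * nat * nat) : vertex :=
  match c with
  | (0, a, b) => Cross a b | (1, a, b) => HPass a b | (_, a, b) => VPass a b
  end.
Lemma vertex_codeK : cancel vertex_code vertex_decode.
Proof. by case. Qed.
HB.instance Definition _ := Equality.copy vertex (can_type vertex_codeK).

Definition is_vertex (p q : nat) (v : vertex) : bool :=
  match v with
  | Cross a b => (a < p) && (b < q)
  | HPass a b => (a < p) && (b.+1 < q)
  | VPass a b => (a.+1 < p) && (b < q)
  end.

Definition is_edge (p q : nat) (u v : vertex) : bool :=
  let adj x y := match x, y with
    | HPass a b, Cross a' b' => (a' == a) && ((b' == b) || (b' == b.+1))
    | VPass a b, Cross a' b' => (b' == b) && ((a' == a) || (a' == a.+1))
    | _, _ => false end in
  [&& is_vertex p q u, is_vertex p q v & adj u v || adj v u].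

(* Shelves: the block between passage rows a, a+1 and columns b, b+1. *)
Definition is_shelf (p q : nat) (s : nat * nat) : bool :=
  (s.1.+1 < p) && (s.2.+1 < q).

(* Closed vertex sequence of the clockwise 0-instance of shelf s
   (corners v_i=(a,b), v_j=(a,b+1), v_m=(a+1,b+1), v_n=(a+1,b)). *)
Definition cw_cycle (s : nat * nat) : seq vertex :=
  let: (a, b) := s in
  [:: Cross a b; HPass a b; Cross a b.+1; VPass a b.+1;
      Cross a.+1 b.+1; HPass a.+1 b; Cross a.+1 b; VPass a b].

Definition cycle_edges (c : seq vertex) : seq (vertex * vertex) :=
  match c with
  | [::] => [::]
  | x :: _ => zip c (rcons (behead c) x)
  end.

Definition instance (cw : bool) (s : nat * nat) : seq (vertex * vertex) :=
  let E := cycle_edges (cw_cycle s) in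
  if cw then E else [seq (e.2, e.1) | e <- rev E].

Definition add_edge (E : seq (vertex * vertex)) (e : vertex * vertex) :=
  if ((e.1, e.2) \in E) || ((e.2, e.1) \in E) then E else rcons E e.

Definition build (o : nat * nat -> bool) (ord : seq (nat * nat))
  : seq (vertex * vertex) :=
  foldl (fun E s => foldl add_edge E (instance (o s) s)) [::] ord.

Definition build_vertices (o : nat * nat -> bool) (ord : seq (nat * nat))
  : seq vertex := flatten [seq cw_cycle s | s <- ord].

Definition reachable (E : seq (vertex * vertex)) (u v : vertex) : Prop :=
  exists2 w : seq vertex, path (fun x y => (x, y) \in E) u w & last u w = v.

From HB Require Import structures.
From mathcomp Require Import all_boot zify.
Set Implicit Arguments. Unset Strict Implicit.

(* Call an edge list E "reversible" when for every directed edge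
   x -> y of E there is a directed path back from y to x.  The empty list is
   reversible, and processing one shelf preserves reversibility: the edges
   newly added are edges of the chosen 0-instance I_s, every edge x -> y of
   I_s is traversable in the new graph (either it was added, or its reverse
   was already present, and that reverse lies in the old reversible graph
   since I_s never contains both orientations of an edge), and since I_s is
   a directed cycle all its vertices are then mutually reachable.  Hence the
   built graph is reversible, so every undirected edge of a shelf boundary,
   which is oriented one way or the other, joins mutually reachable vertices.
   Finally every edge of \bar G lies on the boundary of some shelf, and \bar G
   is connected (walk along passage row 0, then down the passage columns), so
   mutual reachability relates every vertex to Cross 0 0. *)

Section Reachability.
Variable E : seq (vertex * vertex).

Lemma reach_refl u : reachable E u u.
Proof. by exists [::]. Qed.

Lemma reach_edge u v : (u, v) \in E -> reachable E u v.
Proof. by move=> huv; exists [:: v] => //=; rewrite huv. Qed.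

Lemma reach_trans u v w : reachable E u v -> reachable E v w -> reachable E u w.
Proof.
move=> [s1 p1 l1] [s2 p2 l2]; exists (s1 ++ s2); last by rewrite last_cat l1.
by rewrite cat_path p1 l1 p2.
Qed.

Lemma reach_mono E' u v : {subset E <= E'} -> reachable E u v -> reachable E' u v.
Proof. by move=> sub [s ps ls]; exists s => //; apply: sub_path ps => x y /sub. Qed.

End Reachability.

Definition strongly_linked (E : seq (vertex * vertex)) (x y : vertex) : Prop :=
  reachable E x y /\ reachable E y x.

Lemma slink_refl E x : strongly_linked E x x.
Proof. by split; apply: reach_refl. Qed.

Lemma slink_sym E x y : strongly_linked E x y -> strongly_linked E y x.
Proof. by case. Qed.

Lemma slink_trans E x y z :
  strongly_linked E x y -> strongly_linked E y z -> strongly_linked E x z.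
Proof. by move=> [hxy hyx] [hyz hzy]; split; apply: reach_trans; eassumption. Qed.

Lemma add_edges_mono l E : {subset E <= foldl add_edge E l}.
Proof.
elim: l E => [|e l' IH] E x hx //=; apply: IH.
by rewrite /add_edge; case: ifP => // _; rewrite mem_rcons inE hx orbT.
Qed.

Lemma add_edges_orient l E x y : (x, y) \in l ->
  ((x, y) \in foldl add_edge E l) || ((y, x) \in foldl add_edge E l).
Proof.
elim: l E => //= e l' IH E; rewrite inE => /orP [/eqP <-|]; last exact: IH.
rewrite /add_edge /=; case: ifP => [/orP [h|h]|_].
- by rewrite (add_edges_mono l' h).
- by rewrite (add_edges_mono l' h) orbT.
- by rewrite (add_edges_mono l' (x := (x, y))) // mem_rcons mem_head.
Qed.

Lemma add_edges_new l E e : e \in foldl add_edge E l -> (e \in E) || (e \in l).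
Proof.
elim: l E => [|e' l' IH] E /=; first by move=> ->.
move/IH; rewrite inE /add_edge; case: ifP => _.
  by case/orP=> ->; rewrite ?orbT.
by rewrite mem_rcons inE; case/orP => [/orP[->|->]|->]; rewrite ?orbT.
Qed.

Lemma path_zip_rcons (T : eqType) (x y : T) (s : seq T) :
  path (fun u v => (u, v) \in zip (x :: s) (rcons s y)) x (rcons s y).
Proof.
elim: s x => [|z s IH] x /=; first by rewrite mem_head.
by rewrite mem_head /=; apply: sub_path (IH z) => u v huv; rewrite inE huv orbT.
Qed.

Lemma mem_zip (S T : eqType) (s : seq S) (t : seq T) x y :
  (x, y) \in zip s t -> x \in s /\ y \in t.
Proof.
elim: s t => [|a s IH] [|b t] //=; rewrite inE => /orP [/eqP [-> ->]|/IH [hx hy]].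
  by split; apply: mem_head.
by split; rewrite ?in_cons ?hx ?hy orbT.
Qed.

Lemma path_preorder (T : eqType) (e : rel T) (R : T -> T -> Prop) :
  (forall x, R x x) -> (forall x y z, R x y -> R y z -> R x z) ->
  (forall x y, e x y -> R x y) ->
  forall x s, path e x s -> forall y, y \in x :: s -> R x y /\ R y (last x s).
Proof.
move=> Rrefl Rtrans he x s; elim: s x => [|z s IH] x /=.
  by move=> _ y; rewrite inE => /eqP ->.
move=> /andP [exz pzs] y; have IHz := IH z pzs.
have Rxz := he _ _ exz; have Rzl := (IHz z (mem_head z s)).2.
rewrite inE => /orP [/eqP ->|hy].
  by split; [apply: Rrefl | apply: Rtrans Rxz Rzl].
by have [Rzy Ryl] := IHz y hy; split; [apply: Rtrans Rxz Rzy |].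
Qed.

Lemma cycle_connected (R : vertex -> vertex -> Prop) (c : seq vertex) :
  (forall x, R x x) -> (forall x y z, R x y -> R y z -> R x z) ->
  (forall x y, (x, y) \in cycle_edges c -> R x y) ->
  forall u w, u \in c -> w \in c -> R u w.
Proof.
case: c => [|x s] Rrefl Rtrans hc u w //= hu hw.
have through_x := path_preorder Rrefl Rtrans hc (path_zip_rcons x x s).
rewrite last_rcons in through_x.
have on_cycle y : y \in x :: s -> y \in x :: rcons s x.
  by rewrite !in_cons mem_rcons in_cons => /orP [->|->]; rewrite ?orbT.
exact: Rtrans (through_x u (on_cycle u hu)).2 (through_x w (on_cycle w hw)).1.
Qed.

Lemma cycle_edges_mem (c : seq vertex) x y :
  (x, y) \in cycle_edges c -> x \in c /\ y \in c.
Proof.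
case: c => [|z s] //= /mem_zip [hx hy]; split => //.
by move: hy; rewrite mem_rcons !in_cons => /orP [->|->]; rewrite ?orbT.
Qed.

Lemma mem_instance cw s x y : ((x, y) \in instance cw s) =
  if cw then (x, y) \in cycle_edges (cw_cycle s)
  else (y, x) \in cycle_edges (cw_cycle s).
Proof.
rewrite /instance; case: cw => //.
apply/mapP/idP => [[[u v]] + [-> ->] /=|hyx]; first by rewrite mem_rev.
by exists (y, x); rewrite ?mem_rev.
Qed.

Lemma vertex_eqE (u v : vertex) : (u == v) = (vertex_code u == vertex_code v).
Proof. by []. Qed.

(* The clockwise 0-instance never traverses an edge in both directions
   (its eight vertices are distinct). *)
Lemma cw_cycle_antisym s x y : (x, y) \in cycle_edges (cw_cycle s) ->
  (y, x) \in cycle_edges (cw_cycle s) -> False.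
Proof.
case: s => a b; rewrite /= !inE.
by do 8 (try case/orP; first (move/eqP=> [-> ->];
  rewrite !xpair_eqE !vertex_eqE /= !xpair_eqE /=; lia)).
Qed.

Lemma instance_antisym cw s x y :
  (x, y) \in instance cw s -> (y, x) \in instance cw s -> False.
Proof.
rewrite !mem_instance; case: cw => [hxy hyx|hyx hxy];
  exact: cw_cycle_antisym hxy hyx.
Qed.

Lemma instance_vertices cw s x y : (x, y) \in instance cw s ->
  x \in cw_cycle s /\ y \in cw_cycle s.
Proof.
rewrite mem_instance; case: cw => /cycle_edges_mem //.
by move=> [hy hx].
Qed.

Lemma instance_connected (R : vertex -> vertex -> Prop) cw s :
  (forall x, R x x) -> (forall x y z, R x y -> R y z -> R x z) ->
  (forall x y, (x, y) \in instance cw s -> R x y) ->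
  forall u w, u \in cw_cycle s -> w \in cw_cycle s -> R u w.
Proof.
move=> Rrefl Rtrans hR u w hu hw; case: cw hR => hR.
  by apply: (cycle_connected Rrefl Rtrans _ hu hw) => x y hxy; apply: hR;
    rewrite mem_instance.
apply: (cycle_connected (R := fun a b => R b a)) hw hu => //.
- by move=> x y z Ryx Rzy; apply: Rtrans Rzy Ryx.
- by move=> x y hxy; apply: hR; rewrite mem_instance.
Qed.

Definition reversible (E : seq (vertex * vertex)) : Prop :=
  forall x y, (x, y) \in E -> reachable E y x.

Lemma add_instance_reversible E cw s :
  reversible E -> reversible (foldl add_edge E (instance cw s)).
Proof.
set I := instance cw s; set E' := foldl add_edge E I => revE.
have old_reach x y : (x, y) \in E -> reachable E' y x.
  by move=> hxy; apply: reach_mono (revE x y hxy); apply: add_edges_mono.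
have along_I x y : (x, y) \in I -> reachable E' x y.
  move=> hxy; case hE' : ((x, y) \in E'); first exact: reach_edge.
  have := add_edges_orient E hxy; rewrite hE' /= => /add_edges_new /orP [hyx|hyx].
    exact: old_reach.
  by case: (instance_antisym hxy hyx).
move=> x y /add_edges_new /orP [hxy|hxy]; first exact: old_reach.
have [hx hy] := instance_vertices hxy.
exact: (instance_connected (@reach_refl E') (@reach_trans E') along_I).
Qed.

Definition process_shelf (o : nat * nat -> bool) (E : seq (vertex * vertex))
  (s : nat * nat) : seq (vertex * vertex) :=
  foldl add_edge E (instance (o s) s).

Lemma build_process o ord : build o ord = foldl (process_shelf o) [::] ord.
Proof. by []. Qed.

Lemma process_reversible o ord E :
  reversible E -> reversible (foldl (process_shelf o) E ord).
Proof.
by elim: ord E => //= s ord IH E revE; apply/IH/add_instance_reversible.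
Qed.

Lemma process_mono o ord E : {subset E <= foldl (process_shelf o) E ord}.
Proof.
by elim: ord E => [|s ord IH] E x hx //=; apply: IH; apply: add_edges_mono hx.
Qed.

Lemma process_orient o ord E s x y : s \in ord ->
  (x, y) \in cycle_edges (cw_cycle s) ->
  let F := foldl (process_shelf o) E ord in ((x, y) \in F) || ((y, x) \in F).
Proof.
elim: ord E => //= s' ord IH E; rewrite inE => /orP [/eqP <- hxy|]; last exact: IH.
have : ((x, y) \in process_shelf o E s) || ((y, x) \in process_shelf o E s).
  rewrite /process_shelf; case: (o s).
    by apply: add_edges_orient; rewrite mem_instance.
  by rewrite orbC; apply: add_edges_orient; rewrite mem_instance.
by case/orP => /(process_mono o ord) ->; rewrite ?orbT.
Qed.

Lemma build_shelf_linked o ord s x y : s \in ord ->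
  (x, y) \in cycle_edges (cw_cycle s) -> strongly_linked (build o ord) x y.
Proof.
move=> hs hxy; have revB : reversible (build o ord).
  by rewrite build_process; apply: process_reversible.
have /orP [h|h] := process_orient o [::] hs hxy; rewrite -build_process in h.
  by split; [apply: reach_edge | apply: revB].
by split; [apply: revB | apply: reach_edge].
Qed.

Section GridConnectivity.
Variables (E : seq (vertex * vertex)) (p q : nat).
Hypotheses (hp : 1 < p) (hq : 1 < q).
Hypothesis shelf_linked : forall a b x y, a.+1 < p -> b.+1 < q ->
  (x, y) \in cycle_edges (cw_cycle (a, b)) -> strongly_linked E x y.

(* A horizontal passage segment bounds the shelf below it, or, for the last
   passage row, the shelf above it. *)
Lemma hpass_linked a b : a < p -> b.+1 < q ->
  strongly_linked E (Cross a b) (HPass a b) /\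
  strongly_linked E (HPass a b) (Cross a b.+1).
Proof.
move=> ha hb; case: (ltnP a.+1 p) => [ha'|ha'].
  by split; apply: (shelf_linked ha' hb); rewrite /= !inE eqxx ?orbT.
case: a ha ha' => [|a] ha ha'; first lia.
have ha2 : a.+1 < p by lia.
by split; apply: slink_sym; apply: (shelf_linked ha2 hb); rewrite /= !inE eqxx ?orbT.
Qed.

(* A vertical passage segment bounds the shelf to its left, or, for the last
   passage column, the shelf to its right. *)
Lemma vpass_linked a b : a.+1 < p -> b < q ->
  strongly_linked E (Cross a b) (VPass a b) /\
  strongly_linked E (VPass a b) (Cross a.+1 b).
Proof.
move=> ha hb; case: (ltnP b.+1 q) => [hb'|hb'].
  by split; apply: slink_sym; apply: (shelf_linked ha hb');
    rewrite /= !inE eqxx ?orbT.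
case: b hb hb' => [|b] hb hb'; first lia.
have hb2 : b.+1 < q by lia.
by split; apply: (shelf_linked ha hb2); rewrite /= !inE eqxx ?orbT.
Qed.

(* Every crossing is reached from Cross 0 0 along row 0 and then a column. *)
Lemma cross_linked a b : a < p -> b < q ->
  strongly_linked E (Cross 0 0) (Cross a b).
Proof.
elim: a => [|a IH] ha hb.
  elim: b hb => [|b IHb] hb; first exact: slink_refl.
  have [h1 h2] := hpass_linked ha hb.
  exact: slink_trans (IHb (ltnW hb)) (slink_trans h1 h2).
have [h1 h2] := vpass_linked ha hb.
exact: slink_trans (IH (ltnW ha) hb) (slink_trans h1 h2).
Qed.

Lemma vertex_linked v : is_vertex p q v -> strongly_linked E (Cross 0 0) v.
Proof.
case: v => a b /= /andP [ha hb].
- exact: cross_linked.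
- exact: slink_trans (cross_linked ha (ltnW hb)) (hpass_linked ha hb).1.
- exact: slink_trans (cross_linked (ltnW ha) hb) (vpass_linked ha hb).1.
Qed.

End GridConnectivity.

Theorem theorem1 (p q : nat) (o : nat * nat -> bool) (ord : seq (nat * nat)) :
  2 <= p -> 2 <= q ->
  uniq ord -> (forall s, (s \in ord) = is_shelf p q s) ->
  forall u v, is_vertex p q u -> is_vertex p q v ->
  reachable (build o ord) u v.
Proof.
move=> hp hq _ hord u v hu hv.
have shelf_linked a b x y : a.+1 < p -> b.+1 < q ->
    (x, y) \in cycle_edges (cw_cycle (a, b)) -> strongly_linked (build o ord) x y.
  by move=> ha hb; apply: build_shelf_linked; rewrite hord /is_shelf ha hb.
have link_u := vertex_linked hp hq shelf_linked hu.
have link_v := vertex_linked hp hq shelf_linked hv.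
exact: (slink_trans (slink_sym link_u) link_v).1.
Qed.
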